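(* Let $(E,\tau)$ be a locally solid vector lattice and let $x\in E$. Let $I_x$ and $B_x$ denote the ideal and the band in $E$ generated by $x$. Then the restricted topology $\tau|_{B_x}$ is solidly submetrisable if and only if the restricted topology $\tau|_{I_x}$ is solidly submetrisable.
   Context: All vector lattices are real and Archimedean; linear topologies are Hausdorff. A locally solid topology on a vector lattice is a linear topology such that zero has a neighbourhood basis of solid sets. A locally solid topology $\sigma$ on a vector lattice $G$ is called solidly submetrisable if it is finer than some metrisable locally solid topology on $G$. (Here $I_x$ and $B_x$ are regarded as vector lattices with the restricted topologies.) *)

From mathcomp Require Import all_boot all_order all_algebra.
From mathcomp Require Import boolp classical_sets reals.

Set Implicit Arguments.
Unset Strict Implicit.
Unset Printing Implicit Defensive.

Import Order.TTheory GRing.Theory Num.Theory.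
Local Open Scope ring_scope.
Local Open Scope classical_set_scope.

Record VectorLattice (R : realType) (E : lmodType R) : Type := {
  vle : E -> E -> Prop;
  vsup : E -> E -> E;
  vle_refl : forall x, vle x x;
  vle_anti : forall x y, vle x y -> vle y x -> x = y;
  vle_trans : forall x y z, vle x y -> vle y z -> vle x z;
  vle_add : forall x y z, vle x y -> vle (x + z) (y + z);
  vle_scale : forall (a : R) x y, 0 <= a -> vle x y -> vle (a *: x) (a *: y);
  vsup_ub_l : forall x y, vle x (vsup x y);
  vsup_ub_r : forall x y, vle y (vsup x y);
  vsup_least : forall x y z, vle x z -> vle y z -> vle (vsup x y) z;
  varchimedean : forall x y, vle 0 x -> (forall n : nat, vle (x *+ n) y) -> x = 0
}.

Section VL.
Variables (R : realType) (E : lmodType R) (L : VectorLattice E).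

Definition vabs (x : E) : E := vsup L x (- x).

Definition solid (A : set E) : Prop :=
  forall x y, A x -> vle L (vabs y) (vabs x) -> A y.

Definition vsubspace (A : set E) : Prop :=
  A 0 /\ (forall x y, A x -> A y -> A (x + y)) /\
  (forall (a : R) x, A x -> A (a *: x)).

Definition ideal (A : set E) : Prop := vsubspace A /\ solid A.

Definition is_sup (D : set E) (s : E) : Prop :=
  (forall d, D d -> vle L d s) /\
  (forall u, (forall d, D d -> vle L d u) -> vle L s u).

Definition band (A : set E) : Prop :=
  ideal A /\ (forall D s, D `<=` A -> is_sup D s -> A s).

Definition ideal_gen (x : E) : set E :=
  fun y => forall A, ideal A -> A x -> A y.
Definition band_gen (x : E) : set E :=
  fun y => forall A, band A -> A x -> A y.

(* This models the topology of the vector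
   lattice S (an ideal of E, with the restricted operations). *)
Definition topology_on (S : set E) (T : set (set E)) : Prop :=
  (forall U, T U -> U `<=` S) /\ T S /\ T set0 /\
  (forall F : set (set E), F `<=` T -> T (\bigcup_(U in F) U)) /\
  (forall U V, T U -> T V -> T (U `&` V)).

Definition linear_topology_on (S : set E) (T : set (set E)) : Prop :=
  topology_on S T /\
  (forall x y W, S x -> S y -> T W -> W (x + y) ->
     exists U V, [/\ T U, T V, U x, V y &
       forall u v, U u -> V v -> W (u + v)]) /\
  (forall (a : R) x W, S x -> T W -> W (a *: x) ->
     exists (d : R) U, [/\ 0 < d, T U, U x &
       forall (b : R) u, `|b - a| < d -> U u -> W (b *: u)]) /\
  (forall x y, S x -> S y -> x <> y ->
     exists U V, [/\ T U, T V, U x, V y & U `&` V = set0]).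

Definition nbhd_of (T : set (set E)) (z : E) (N : set E) : Prop :=
  exists U, [/\ T U, U z & U `<=` N].

Definition solid_in (S A : set E) : Prop :=
  forall x y, A x -> S y -> vle L (vabs y) (vabs x) -> A y.

Definition locally_solid_on (S : set E) (T : set (set E)) : Prop :=
  linear_topology_on S T /\
  forall W, nbhd_of T 0 W ->
    exists N, [/\ nbhd_of T 0 N, N `<=` W, N `<=` S & solid_in S N].

Definition metric_on (S : set E) (d : E -> E -> R) : Prop :=
  (forall x y, S x -> S y -> 0 <= d x y) /\
  (forall x y, S x -> S y -> (d x y = 0 <-> x = y)) /\
  (forall x y, S x -> S y -> d x y = d y x) /\
  (forall x y z, S x -> S y -> S z -> d x z <= d x y + d y z).

Definition metric_open (S : set E) (d : E -> E -> R) (U : set E) : Prop :=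
  U `<=` S /\
  forall u, U u -> exists e : R, 0 < e /\ forall v, S v -> d u v < e -> U v.

Definition metrisable_on (S : set E) (T : set (set E)) : Prop :=
  exists d, metric_on S d /\ forall U, T U <-> metric_open S d U.

Definition coarser (rho sigma : set (set E)) : Prop := rho `<=` sigma.

Definition solidly_submetrisable_on (S : set E) (sigma : set (set E)) : Prop :=
  exists rho, [/\ locally_solid_on S rho, metrisable_on S rho & coarser rho sigma].

Definition restrict_top (tau : set (set E)) (S : set E) : set (set E) :=
  fun V => exists U, tau U /\ V = U `&` S.

End VL.

(* If [tau|B_x] is solidly submetrisable, so is its restriction to the ideal [I_x], which
   lies in [B_x]. Conversely, take a metric for a locally solid topology coarser than
   [tau|I_x]: its balls of radius [2^-n] around 0 are traces of [tau]-neighbourhoods [G_n]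
   of 0 whose intersection meets [I_x] only in 0. Refine them to solid [tau]-neighbourhoods [U_n]
   with [U_(n+1) + U_(n+1) + U_(n+1) <= U_n] and [U_(n+1) <= G_n]. As in the
   Birkhoff-Kakutani metrisation theorem, the [U_n] yield a solid, [tau]-continuous
   F-seminorm [N] with [N z < 2^-m -> z \in U_m]. Then [y |-> N (|y| /\ |x|)] is an F-norm
   on [B_x]: if it vanishes at [y], then [|y| /\ |x|] lies in [I_x] and in every [U_n], so
   it is 0; thus [y] is disjoint from [x], and [y = 0] because [y] lies in the band
   generated by [x]. Its metric topology is the required coarser locally solid metrisable
   topology on [B_x]. *)

From mathcomp Require Import all_boot all_order all_algebra.
From mathcomp Require Import boolp classical_sets reals.
From mathcomp Require Import ring lra.

Set Implicit Arguments.
Unset Strict Implicit.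
Unset Printing Implicit Defensive.
Import Order.TTheory GRing.Theory Num.Theory.
Local Open Scope ring_scope.
Local Open Scope classical_set_scope.

Section VectorLatticeTheory.
Variables (R : realType) (E : lmodType R) (L : VectorLattice E).
Local Notation le := (vle L).
Local Notation sup := (vsup L).
Local Notation abs := (vabs L).

Lemma vle_addl a b c : le a b -> le (c + a) (c + b).
Proof. by move=> h; rewrite ![c + _]addrC; apply: vle_add. Qed.

Lemma vleD a b c d : le a b -> le c d -> le (a + c) (b + d).
Proof. by move=> h1 h2; apply: vle_trans (vle_add c h1) (vle_addl b h2). Qed.

Lemma vlerBlDr a b c : le (a - c) b <-> le a (b + c).
Proof.
split=> h; first by have := vle_add c h; rewrite subrK.
by have := vle_add (- c) h; rewrite addrK.
Qed.

Lemma vlerBrDr a b c : le a (b - c) <-> le (a + c) b.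
Proof.
split=> h; first by have := vle_add c h; rewrite subrK.
by have := vle_add (- c) h; rewrite addrK.
Qed.

Lemma vsubr_ge0 a b : le 0 (b - a) <-> le a b.
Proof. by rewrite vlerBrDr add0r. Qed.

Lemma vleN2 a b : le a b -> le (- b) (- a).
Proof.
by move=> /vsubr_ge0 h; apply/vsubr_ge0; rewrite opprK addrC.
Qed.

Lemma vle_addr_ge0 a c : le 0 c -> le a (a + c).
Proof. by move=> h; have := vle_addl a h; rewrite addr0. Qed.

Lemma vsupC a b : sup a b = sup b a.
Proof. by apply: vle_anti; apply: vsup_least; apply: vsup_ub_l || apply: vsup_ub_r. Qed.

Lemma vsup_mono a a' b : le a a' -> le (sup a b) (sup a' b).
Proof.
move=> h; apply: vsup_least; last exact: vsup_ub_r.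
exact: vle_trans h (vsup_ub_l L _ _).
Qed.

Lemma vsupDr a b c : sup a b + c = sup (a + c) (b + c).
Proof.
apply: vle_anti; last by apply: vsup_least; apply: vle_add;
  [exact: vsup_ub_l | exact: vsup_ub_r].
apply/vlerBrDr/vsup_least; apply/vlerBrDr; [exact: vsup_ub_l | exact: vsup_ub_r].
Qed.

Lemma vsupZ (t : R) a b : 0 < t -> sup (t *: a) (t *: b) = t *: sup a b.
Proof.
move=> t0; have tV0 : 0 <= t^-1 by rewrite invr_ge0 ltW.
have scaleKV y : t *: (t^-1 *: y) = y by rewrite scalerA divff ?scale1r ?gt_eqF.
have scaleVK y : t^-1 *: (t *: y) = y by rewrite scalerA mulVf ?scale1r ?gt_eqF.
apply: vle_anti.
  by apply: vsup_least; apply: vle_scale (ltW t0) _;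
    [exact: vsup_ub_l | exact: vsup_ub_r].
rewrite -[X in le _ X]scaleKV; apply: vle_scale (ltW t0) _.
by apply: vsup_least; rewrite -[X in le X _]scaleVK; apply: vle_scale tV0 _;
  [exact: vsup_ub_l | exact: vsup_ub_r].
Qed.

Definition vinf a b := - sup (- a) (- b).

Lemma vinf_lel a b : le (vinf a b) a.
Proof. by rewrite -[X in le _ X]opprK; apply/vleN2/vsup_ub_l. Qed.

Lemma vinf_ler a b : le (vinf a b) b.
Proof. by rewrite -[X in le _ X]opprK; apply/vleN2/vsup_ub_r. Qed.

Lemma vinf_glb a b c : le c a -> le c b -> le c (vinf a b).
Proof. by move=> ha hb; rewrite -[c]opprK; apply/vleN2/vsup_least; apply: vleN2. Qed.

Lemma vinfC a b : vinf a b = vinf b a.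
Proof. by rewrite /vinf vsupC. Qed.

Lemma vinf_id a : vinf a a = a.
Proof. by apply: vle_anti (vinf_lel a a) (vinf_glb (vle_refl L a) (vle_refl L a)). Qed.

Lemma vinf_mono a a' b : le a a' -> le (vinf a b) (vinf a' b).
Proof.
by move=> h; apply: vinf_glb; [exact: vle_trans (vinf_lel _ _) h | exact: vinf_ler].
Qed.

Lemma vinfDr a b c : vinf a b + c = vinf (a + c) (b + c).
Proof. by rewrite /vinf -[c]opprK -opprD vsupDr !opprK -!opprD. Qed.

Lemma vinf_add_vsup a b : vinf a b + sup a b = a + b.
Proof.
have -> : sup a b = sup (- a) (- b) + (a + b).
  by rewrite vsupDr addKr vsupC addrC addrK.
by rewrite /vinf addKr.
Qed.

Lemma vinf_subadd a b c : le 0 a -> le 0 b -> le 0 c ->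
  le (vinf (a + b) c) (vinf a c + vinf b c).
Proof.
move=> a0 b0 c0; apply/vlerBlDr/vinf_glb.
- apply/vlerBlDr; rewrite [a + vinf _ _]addrC vinfDr; apply: vinf_glb.
    by rewrite addrC; exact: vinf_lel.
  exact: vle_trans (vinf_ler _ _) (vle_addr_ge0 _ a0).
- apply: vle_trans (vinf_ler (a + b) c); apply/vlerBlDr/vle_addr_ge0.
  exact: vinf_glb.
Qed.

Lemma vabs_lel a : le a (abs a). Proof. exact: vsup_ub_l. Qed.

Lemma vabs_leN a : le (- a) (abs a). Proof. exact: vsup_ub_r. Qed.

Lemma vabs_least a c : le a c -> le (- a) c -> le (abs a) c.
Proof. exact: vsup_least. Qed.

Lemma vabs_ge0 a : le 0 (abs a).
Proof.
have : le 0 ((2^-1 : R) *: (abs a + abs a)).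
  rewrite -(scaler0 _ (2^-1 : R)); apply: vle_scale; first by rewrite invr_ge0.
  by rewrite -(subrr a); apply: vleD; [exact: vabs_lel | exact: vabs_leN].
by rewrite -mulr2n -scaler_nat scalerA mulVf ?scale1r ?pnatr_eq0.
Qed.

Lemma vabsN a : abs (- a) = abs a.
Proof. by rewrite /vabs opprK vsupC. Qed.

Lemma vabs_id a : le 0 a -> abs a = a.
Proof.
move=> a0; apply: vle_anti (vabs_lel a); apply: vabs_least; first exact: vle_refl.
by apply: (vle_trans _ a0); rewrite -oppr0; apply: vleN2.
Qed.

Lemma vabs_abs a : abs (abs a) = abs a.
Proof. exact/vabs_id/vabs_ge0. Qed.

Lemma vabs0 : abs 0 = 0.
Proof. exact/vabs_id/vle_refl. Qed.

Lemma vabs_eq0 a : abs a = 0 -> a = 0.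
Proof.
move=> h; apply: vle_anti; first by rewrite -h; exact: vabs_lel.
by rewrite -[a]opprK -oppr0 -h; apply/vleN2/vabs_leN.
Qed.

Lemma vabsD a b : le (abs (a + b)) (abs a + abs b).
Proof.
apply: vabs_least; first exact: vleD (vabs_lel a) (vabs_lel b).
by rewrite opprD; exact: vleD (vabs_leN a) (vabs_leN b).
Qed.

Lemma vabsZ (t : R) a : abs (t *: a) = `|t| *: abs a.
Proof.
have absZ_ge0 s y : 0 <= s -> abs (s *: y) = s *: abs y.
  rewrite le_eqVlt => /predU1P[<-|s0]; first by rewrite !scale0r vabs0.
  by rewrite /vabs -vsupZ // scalerN.
have [t0|t0] := lerP 0 t; first by rewrite ger0_norm // absZ_ge0.
by rewrite ltr0_norm // -vabsN -scaleNr absZ_ge0 // oppr_ge0 ltW.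
Qed.

Lemma vabs_scale_le1 (t : R) a : `|t| <= 1 -> le (abs (t *: a)) (abs a).
Proof.
move=> t1; rewrite vabsZ -vsubr_ge0 -{1}(scale1r (abs a)) -scalerBl.
by rewrite -(scaler0 _ (1 - `|t|)); apply: vle_scale (vabs_ge0 a); rewrite subr_ge0.
Qed.

Lemma vabs_scale_le_muln (t : R) a :
  le (abs (t *: a)) (abs (a *+ Num.bound `|t|)).
Proof.
rewrite -scaler_nat !vabsZ normr_nat -vsubr_ge0 -scalerBl.
rewrite -(scaler0 _ ((Num.bound `|t|)%:R - `|t|)); apply: vle_scale (vabs_ge0 a).
by rewrite subr_ge0 ltW // archi_boundP.
Qed.

Lemma is_sup_set0 s : is_sup L set0 s -> s = 0.
Proof.
move=> [_ s_least]; have s_min u : le s u by apply: s_least.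
by apply: (vle_anti (s_min 0)); have /vsubr_ge0 := s_min (s + s); rewrite addrK.
Qed.

Lemma vabs_le_vpos_vneg a : le (abs a) (sup a 0 + sup (- a) 0).
Proof.
apply: vabs_least; apply: vle_trans (vsup_ub_l L _ _) _.
  by apply: vle_addr_ge0; exact: vsup_ub_r.
by rewrite addrC; apply: vle_addr_ge0; exact: vsup_ub_r.
Qed.

Lemma vpos_le_abs a : le (sup a 0) (abs a).
Proof. by apply: vsup_least; [exact: vabs_lel | exact: vabs_ge0]. Qed.

End VectorLatticeTheory.

Section Disjointness.
Variables (R : realType) (E : lmodType R) (L : VectorLattice E).
Local Notation le := (vle L).
Local Notation sup := (vsup L).
Local Notation abs := (vabs L).
Local Notation vinf := (vinf L).

Definition vtrunc (c y : E) : E := vinf (abs y) c.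

Definition disj (c : E) : set E := [set z | vtrunc c z = 0].

Variable c : E.

Lemma vtrunc_le_abs y : le (vtrunc c y) (abs y). Proof. exact: vinf_lel. Qed.

Lemma vtrunc_le y : le (vtrunc c y) c. Proof. exact: vinf_ler. Qed.

Lemma vtrunc_mono y z : le (abs y) (abs z) -> le (vtrunc c y) (vtrunc c z).
Proof. exact: vinf_mono. Qed.

Hypothesis c_ge0 : le 0 c.

Lemma vtrunc_ge0 y : le 0 (vtrunc c y).
Proof. exact: vinf_glb (vabs_ge0 L y) c_ge0. Qed.

Lemma vabs_vtrunc y : abs (vtrunc c y) = vtrunc c y.
Proof. exact/vabs_id/vtrunc_ge0. Qed.

Lemma vtrunc_subadd y z : le (vtrunc c (y + z)) (vtrunc c y + vtrunc c z).
Proof.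
apply: vle_trans (vinf_subadd (vabs_ge0 L y) (vabs_ge0 L z) c_ge0).
exact/vinf_mono/vabsD.
Qed.

Lemma vtrunc0 : vtrunc c 0 = 0.
Proof.
by apply: vle_anti _ (vtrunc_ge0 0); rewrite -[X in le _ X](vabs0 L); exact: vtrunc_le_abs.
Qed.

Lemma disj_le0 z : le (vtrunc c z) 0 -> disj c z.
Proof. by move=> h; apply: vle_anti h (vtrunc_ge0 z). Qed.

Lemma disj_solid y z : disj c y -> le (abs z) (abs y) -> disj c z.
Proof. by rewrite /disj /= => hy h; apply: disj_le0; rewrite -hy; exact: vtrunc_mono. Qed.

Lemma disjD y z : disj c y -> disj c z -> disj c (y + z).
Proof.
rewrite /disj /= => hy hz; apply: disj_le0.
by rewrite -(addr0 0) -{1}hy -hz; exact: vtrunc_subadd.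
Qed.

Lemma disjZ (t : R) y : disj c y -> disj c (t *: y).
Proof.
move=> hy; apply: (disj_solid _ (vabs_scale_le_muln L t y)).
elim: (Num.bound _) => [|k ih]; last by rewrite mulrS; exact: disjD.
by rewrite mulr0n; exact: vtrunc0.
Qed.

(* Every [d^+] with [d^+ /\ c = 0] equals [(d^+ \/ c) - c]; hence [s^+ <= (s^+ \/ c) - c],
   which forces [s^+ /\ c = 0]. *)
Lemma disj_vpos_sup D s : is_sup L D s -> D `<=` disj c -> disj c (sup s 0).
Proof.
move=> [s_ub s_least] Dc; apply: disj_le0.
have s_bound : le s (sup (sup s 0) c - c).
  apply: s_least => d Dd; apply: vle_trans (vsup_ub_l L d 0) _.
  have dc : vinf (sup d 0) c = 0.
    apply: vle_anti _ (vinf_glb (vsup_ub_r L _ _) c_ge0).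
    by rewrite -[X in le _ X](Dc d Dd); apply/vinf_mono/vpos_le_abs.
  have dpos_eq : sup d 0 = sup (sup d 0) c - c.
    by have := vinf_add_vsup L (sup d 0) c; rewrite dc add0r => ->; rewrite addrK.
  by rewrite {1}dpos_eq; apply: vle_add; apply/vsup_mono/vsup_mono/s_ub.
have spos_bound : le (sup s 0) (sup (sup s 0) c - c).
  by apply: vsup_least s_bound _; apply/vsubr_ge0/vsup_ub_r.
rewrite /vtrunc vabs_id; last exact: vsup_ub_r.
have -> : vinf (sup s 0) c = sup s 0 - (sup (sup s 0) c - c).
  by rewrite opprB addrA -(vinf_add_vsup L (sup s 0) c) addrK.
by apply/vlerBlDr; rewrite add0r.
Qed.

Lemma disj_sup D s : D `<=` disj c -> is_sup L D s -> disj c s.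
Proof.
move=> Dc s_sup; have [D0|/set0P[d Dd]] := eqVneq D set0.
  by move: s_sup; rewrite D0 => /is_sup_set0 ->; exact: vtrunc0.
have s_neg : disj c (sup (- s) 0).
  apply: disj_solid (Dc d Dd) _; rewrite vabs_id; last exact: vsup_ub_r.
  apply: vsup_least (vabs_ge0 L d); apply: vle_trans _ (vabs_leN L d).
  exact/vleN2/s_sup.1.
apply: disj_solid (disjD (disj_vpos_sup s_sup Dc) s_neg) _.
rewrite [abs (_ + _)]vabs_id; first exact: vabs_le_vpos_vneg.
by rewrite -[X in le X _](addr0 0); apply: vleD; exact: vsup_ub_r.
Qed.

Lemma band_disj : band L (disj c).
Proof.
split; last exact: disj_sup.
by split; [split; [exact: vtrunc0 | split; [exact: disjD | exact: disjZ]] | exact: disj_solid].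
Qed.

End Disjointness.

Section GeneratedIdealBand.
Variables (R : realType) (E : lmodType R) (L : VectorLattice E).
Local Notation abs := (vabs L).

Lemma band_bigcap (I : Type) (P : I -> Prop) (F : I -> set E) :
  (forall i, P i -> band L (F i)) -> band L [set z | forall i, P i -> F i z].
Proof.
move=> Fband; split; first split; first split.
- by move=> i /Fband [[[F0 _] _] _].
- split=> [a b Fa Fb | t a Fa] i Pi; have [[[_ [FD FZ]] _] _] := Fband i Pi.
    by apply: FD; [exact: Fa | exact: Fb].
  by apply: FZ; exact: Fa.
- by move=> a b Fa ab i Pi; have [[_ Fsolid] _] := Fband i Pi; exact: Fsolid (Fa i Pi) ab.
- move=> D s DF s_sup i Pi; have [_ Fsup] := Fband i Pi.
  by apply: Fsup s_sup => d /DF; apply.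
Qed.

Variable x : E.

Lemma ideal_gen_self : ideal_gen L x x.
Proof. by move=> A. Qed.

Lemma ideal_gen_ideal : ideal L (ideal_gen L x).
Proof.
split; first split; first by move=> A [[A0 _] _].
  split=> [a b Ia Ib | t a Ia] A Aideal Ax; have [[_ [AD AZ]] _] := Aideal.
    by apply: AD; [exact: Ia | exact: Ib].
  by apply: AZ; exact: Ia.
by move=> a b Ia ab A Aideal Ax; have [_ Asolid] := Aideal; exact: Asolid (Ia A _ Ax) ab.
Qed.

Lemma band_gen_vsubspace : vsubspace (band_gen L x).
Proof.
split; first by move=> A [[[A0 _] _] _].
split=> [a b Ba Bb | t a Ba] A Aband Ax; have [[[_ [AD AZ]] _] _] := Aband.
  by apply: AD; [exact: Ba | exact: Bb].
by apply: AZ; exact: Ba.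
Qed.

Lemma ideal_gen_sub_band_gen : ideal_gen L x `<=` band_gen L x.
Proof. by move=> a Ia A [Aideal _]; exact: Ia. Qed.

Lemma vtrunc_ideal_gen y : ideal_gen L x (vtrunc L (abs x) y).
Proof.
have [_ Isolid] := ideal_gen_ideal; apply: Isolid ideal_gen_self _.
by rewrite (vabs_vtrunc (vabs_ge0 L x)); exact: vtrunc_le.
Qed.

(* [band_gen x] lies in the band [x^dd] of elements disjoint from everything disjoint from [x]. *)
Lemma band_gen_vtrunc_eq0 y : band_gen L x y -> vtrunc L (abs x) y = 0 -> y = 0.
Proof.
move=> By xy.
have x_dd : band L [set z | forall w, disj L (abs x) w -> disj L (abs w) z].
  by apply: band_bigcap => w _; apply: band_disj; exact: vabs_ge0.
have x_in : forall w, disj L (abs x) w -> disj L (abs w) x.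
  by move=> w; rewrite /disj /= /vtrunc vinfC.
have /(_ y xy) := By _ x_dd x_in.
by rewrite /disj /= /vtrunc vinf_id => /vabs_eq0.
Qed.

End GeneratedIdealBand.

Section MetricTopology.
Variables (R : realType) (E : lmodType R) (S : set E) (d : E -> E -> R).
Hypothesis dS : metric_on S d.

Definition mball (u : E) (r : R) : set E := [set v | S v /\ d u v < r].

Lemma mball_open u r : S u -> metric_open S d (mball u r).
Proof.
have [_ [_ [_ d_tri]]] := dS; move=> Su; split=> [v [] // | v [Sv duv]].
exists (r - d u v); split=> [|z Sz dvz]; first by rewrite subr_gt0.
by split=> //; have := d_tri u v z Su Sv Sz; lra.
Qed.

Lemma mball_center u r : S u -> 0 < r -> mball u r u.
Proof. by have [_ [d0 _]] := dS; move=> Su r0; split=> //; rewrite (proj2 (d0 u u Su Su)). Qed.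

Lemma metric_open_bigcup (F : set (set E)) :
  F `<=` metric_open S d -> metric_open S d (\bigcup_(U in F) U).
Proof.
move=> Fopen; split=> [z [U /Fopen [US _] Uz] | u [U FU Uu]]; first exact: US.
have [_ /(_ u Uu) [e [e0 ball_e]]] := Fopen U FU.
by exists e; split=> // v Sv duv; exists U => //; exact: ball_e.
Qed.

Lemma metric_topology : topology_on S (metric_open S d).
Proof.
split; first by move=> U [].
split; first by split=> // u Su; exists 1; split.
split; first by split=> // u [].
split; first exact: metric_open_bigcup.
move=> U V [US Uopen] [_ Vopen]; split=> [z [Uz _] | u [Uu Vu]]; first exact: US.
have [e1 [e10 h1]] := Uopen u Uu; have [e2 [e20 h2]] := Vopen u Vu.
exists (Num.min e1 e2); split=> [|v Sv]; first by rewrite lt_min e10 e20.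
by rewrite lt_min => /andP[d1 d2]; split; [exact: h1 | exact: h2].
Qed.

Lemma metric_hausdorff a b : S a -> S b -> a <> b ->
  exists U V, [/\ metric_open S d U, metric_open S d V, U a, V b & U `&` V = set0].
Proof.
have [d_ge0 [d_eq0 [d_sym d_tri]]] := dS; move=> Sa Sb ab.
have dab : 0 < d a b.
  by rewrite lt_neqAle d_ge0 // andbT eq_sym; apply/eqP => /(d_eq0 a b Sa Sb).
exists (mball a (d a b / 2)), (mball b (d a b / 2)).
split; [exact: mball_open | exact: mball_open | | |].
- by apply: mball_center; rewrite ?divr_gt0.
- by apply: mball_center; rewrite ?divr_gt0.
apply/seteqP; split=> // z [[Sz daz] [_ dbz]].
by have := d_tri a z b Sa Sz Sb; rewrite (d_sym z b) //; lra.
Qed.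

End MetricTopology.

Section Restriction.
Variables (R : realType) (E : lmodType R) (L : VectorLattice E).
Variables (S S' : set E).
Hypothesis S'S : S' `<=` S.

Lemma restrict_topology rho : topology_on S rho -> topology_on S' (restrict_top rho S').
Proof.
move=> [_ [rhoS [rho0 [rhoU rhoI]]]].
split; first by move=> _ [O [_ ->]] z [].
split; first by exists S; split=> //; rewrite setIidr.
split; first by exists set0; split=> //; rewrite set0I.
split=> [F F_open | _ _ [O1 [rO1 ->]] [O2 [rO2 ->]]]; last first.
  by exists (O1 `&` O2); split; [exact: rhoI | rewrite setIACA setIid].
exists (\bigcup_(O in [set O | rho O /\ F (O `&` S')]) O); split; first by apply: rhoU => O [].
apply/seteqP; split=> [z [U FU Uz] | z [[O [_ FO] Oz] S'z]]; last by exists (O `&` S').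
have [O [rO eO]] := F_open U FU; move: (Uz); rewrite eO => -[Oz S'z].
by split=> //; exists O => //; split=> //; rewrite -eO.
Qed.

Lemma restrict_top_restrict tau : restrict_top (restrict_top tau S) S' = restrict_top tau S'.
Proof.
apply/seteqP; split=> [_ [_ [[O [tO ->]] ->]] | _ [O [tO ->]]].
  by exists O; split=> //; rewrite -setIA (setIidr S'S).
by exists (O `&` S); split; [exists O | rewrite -setIA (setIidr S'S)].
Qed.

Lemma restrict_top_coarser rho sigma :
  coarser rho sigma -> coarser (restrict_top rho S') (restrict_top sigma S').
Proof. by move=> rs _ [O [rO ->]]; exists O; split=> //; exact: rs. Qed.

Lemma metric_on_sub d : metric_on S d -> metric_on S' d.
Proof.
move=> [d_ge0 [d_eq0 [d_sym d_tri]]].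
split; first by move=> a b /S'S Sa /S'S Sb; exact: d_ge0.
split; first by move=> a b /S'S Sa /S'S Sb; exact: d_eq0.
split; first by move=> a b /S'S Sa /S'S Sb; exact: d_sym.
by move=> a b c /S'S Sa /S'S Sb /S'S Sc; exact: d_tri.
Qed.

(* An [S']-open set is the trace on [S'] of the union of the [S]-balls with the same
   centres and radii. *)
Lemma restrict_metric_open rho d : metric_on S d ->
  (forall U, rho U <-> metric_open S d U) ->
  forall U, restrict_top rho S' U <-> metric_open S' d U.
Proof.
move=> dS rho_d U; split.
  move=> [O [/rho_d [OS O_open] ->]]; split=> [z [] // | u [Ou S'u]].
  have [e [e0 ball_e]] := O_open u Ou.
  by exists e; split=> // v S'v duv; split=> //; apply: ball_e (S'S S'v) duv.
move=> [US' U_open].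
pose F := [set O | exists u e, [/\ U u, 0 < e, mball S' d u e `<=` U & O = mball S d u e]].
exists (\bigcup_(O in F) O); split.
  apply/rho_d/metric_open_bigcup => _ [u [e [Uu _ _ ->]]].
  exact: mball_open (S'S (US' u Uu)).
apply/seteqP; split=> [z Uz | z [[_ [u [e [_ _ ball_e ->]]] [_ duz]] S'z]]; last exact: ball_e.
have [e [e0 ball_e]] := U_open z Uz; have S'z := US' z Uz.
split=> //; exists (mball S d z e); last exact: mball_center (S'S S'z) e0.
by exists z, e; split=> // v [S'v dzv]; exact: ball_e.
Qed.

Hypothesis S'_sub : vsubspace S'.

Lemma restrict_linear_topology rho :
  linear_topology_on S rho -> linear_topology_on S' (restrict_top rho S').
Proof.
have [_ [S'D S'Z]] := S'_sub.
move=> [rho_top [rho_add [rho_scale rho_T2]]].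
split; first exact: restrict_topology.
split.
  move=> a b _ S'a S'b [O [rO ->]] [Oab _].
  have [U [V [rU rV Ua Vb UV]]] := rho_add a b O (S'S S'a) (S'S S'b) rO Oab.
  exists (U `&` S'), (V `&` S'); split; [by exists U | by exists V | by [] | by [] |].
  by move=> u v [Uu S'u] [Vv S'v]; split; [exact: UV | exact: S'D].
split.
  move=> t a _ S'a [O [rO ->]] [Ota _].
  have [e [U [e0 rU Ua UW]]] := rho_scale t a O (S'S S'a) rO Ota.
  exists e, (U `&` S'); split=> //; first by exists U.
  by move=> b u tb [Uu S'u]; split; [exact: UW | exact: S'Z].
move=> a b S'a S'b ab.
have [U [V [rU rV Ua Vb UV]]] := rho_T2 a b (S'S S'a) (S'S S'b) ab.
exists (U `&` S'), (V `&` S'); split; [by exists U | by exists V | by [] | by [] |].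
by rewrite setIACA setIid UV set0I.
Qed.

Lemma restrict_locally_solid rho :
  locally_solid_on L S rho -> locally_solid_on L S' (restrict_top rho S').
Proof.
move=> [rho_lin rho_solid]; split; first exact: restrict_linear_topology.
move=> W [_ [[O [rO ->]] [O0 _] OW]].
have nO : nbhd_of rho 0 O by exists O; split.
have [N [[O2 [rO2 O20 O2N]] NO _ N_solid]] := rho_solid O nO.
exists (N `&` S'); split.
- by exists (O2 `&` S'); split; [exists O2 | split; [| exact: S'_sub.1] | exact: setSI].
- by move=> z [Nz S'z]; apply: OW; split=> //; exact: NO.
- exact: subIsetr.
- by move=> a b [Na S'a] S'b ab; split=> //; exact: N_solid Na (S'S S'b) ab.
Qed.

Lemma restrict_solidly_submetrisable tau :
  solidly_submetrisable_on L S (restrict_top tau S) ->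
  solidly_submetrisable_on L S' (restrict_top tau S').
Proof.
move=> [rho [rho_ls [d [dS rho_d]] rho_tau]]; exists (restrict_top rho S'); split.
- exact: restrict_locally_solid.
- by exists d; split; [exact: metric_on_sub | exact: restrict_metric_open].
- by rewrite -(restrict_top_restrict tau); exact: restrict_top_coarser.
Qed.

End Restriction.

Section ZeroNeighbourhoods.
Variables (R : realType) (E : lmodType R) (L : VectorLattice E).
Variable tau : set (set E).
Hypothesis tau_ls : locally_solid_on L setT tau.
Local Notation nbhd := (nbhd_of tau 0).

Lemma nbhd0 W : nbhd W -> W 0.
Proof. by move=> [U [_ U0 UW]]; exact: UW. Qed.

Lemma nbhdT : nbhd setT.
Proof. by have [[[_ [tauT _]] _] _] := tau_ls; exists setT. Qed.

Lemma nbhdI A B : nbhd A -> nbhd B -> nbhd (A `&` B).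
Proof.
have [[[_ [_ [_ [_ tauI]]]] _] _] := tau_ls.
move=> [U [tU U0 UA]] [V [tV V0 VB]].
by exists (U `&` V); split; [exact: tauI | by [] | exact: setISS].
Qed.

Lemma nbhd_solid W : nbhd W -> exists N, [/\ nbhd N, N `<=` W & solid L N].
Proof.
have [_ tau_solid] := tau_ls; move=> /tau_solid [N [nN NW _ N_solid]].
by exists N; split=> // a b Na; exact: N_solid.
Qed.

Lemma nbhd_add W : nbhd W -> exists2 V, nbhd V & forall a b, V a -> V b -> W (a + b).
Proof.
have [[[_ [_ [_ [_ tauI]]]] [tau_add _]] _] := tau_ls.
move=> [O [tO O0 OW]].
have O00 : O (0 + 0) by rewrite addr0.
have [U [V [tU tV U0 V0 UV]]] := tau_add 0 0 O I I tO O00.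
exists (U `&` V); first by exists (U `&` V); split=> //; exact: tauI.
by move=> a b [Ua _] [_ Vb]; apply: OW; exact: UV.
Qed.

Lemma nbhd_add3_solid W : nbhd W -> exists V, [/\ nbhd V, solid L V &
  forall a b c, V a -> V b -> V c -> W (a + (b + c))].
Proof.
move=> /nbhd_add [V1 nV1 V1W]; have [V2 nV2 V2V1] := nbhd_add nV1.
have [V [nV VV2 V_solid]] := nbhd_solid nV2.
exists V; split=> // a b c Va Vb Vc; apply: V1W; last by apply: V2V1; exact: VV2.
by rewrite -[a]addr0; apply: V2V1; [exact: VV2 | exact: nbhd0].
Qed.

Lemma nbhd_scale y W : nbhd W ->
  exists2 e : R, 0 < e & forall b : R, `|b| < e -> W (b *: y).
Proof.
have [[_ [_ [tau_scale _]]] _] := tau_ls.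
move=> [O [tO O0 OW]].
have O0y : O (0 *: y) by rewrite scale0r.
have [e [U [e0 tU Uy UO]]] := tau_scale 0 y O I tO O0y.
by exists e => // b b_small; apply/OW/UO; rewrite ?subr0.
Qed.

Lemma nbhd_translate o W : nbhd W ->
  exists G, [/\ tau G, G o & forall v, G v -> W (v - o)].
Proof.
have [[_ [tau_add _]] _] := tau_ls.
move=> [O [tO O0 OW]].
have Oo : O (o - o) by rewrite subrr.
have [U [V [tU tV Uo Vo UV]]] := tau_add o (- o) O I I tO Oo.
by exists U; split=> // v Uv; apply/OW/UV.
Qed.

Lemma nbhd_chain (M : nat -> set E) : (forall n, nbhd (M n)) ->
  exists U : nat -> set E,
  [/\ U 0%N = setT, forall n, nbhd (U n), forall n, solid L (U n),
      forall n, U n.+1 `<=` M n &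
      forall n a b c, U n.+1 a -> U n.+1 b -> U n.+1 c -> U n (a + (b + c))].
Proof.
move=> nM.
have /choice [next next_spec] : forall p : set E * nat, exists V, nbhd p.1 ->
    [/\ nbhd V, solid L V, V `<=` M p.2 &
     forall a b c, V a -> V b -> V c -> p.1 (a + (b + c))].
  move=> [W n]; have [nW|nW] := pselect (nbhd W); last by exists setT => /nW.
  have [V [nV V_solid V3]] := nbhd_add3_solid (nbhdI nW (nM n)).
  exists V => _; split=> // [z Vz|a b c Va Vb Vc]; last by have [] := V3 a b c Va Vb Vc.
  by have [] := V3 z 0 0 Vz (nbhd0 nV) (nbhd0 nV); rewrite !addr0.
pose U := fix U n := if n is k.+1 then next (U k, k) else setT.
have nU n : nbhd (U n).
  by elim: n => [|n IH]; [exact: nbhdT | have [] := next_spec (U n, n) IH].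
exists U; split=> // [[|n]|n|n]; try by have [] := next_spec (U n, n) (nU n).
by move=> a b.
Qed.

End ZeroNeighbourhoods.

Section SolidFNorm.
Variables (R : realType) (E : lmodType R) (L : VectorLattice E).
Local Notation le := (vle L).
Local Notation abs := (vabs L).
Variables (S : set E) (p : E -> R).
Hypothesis S_sub : vsubspace S.
Hypothesis p0 : p 0 = 0.
Hypothesis pD : forall y z, p (y + z) <= p y + p z.
Hypothesis p_solid : forall y z, le (abs y) (abs z) -> p y <= p z.
Hypothesis p_definite : forall y, S y -> p y = 0 -> y = 0.
Hypothesis pZ_small : forall a (e : R), 0 < e ->
  exists2 r : R, 0 < r & forall t, `|t| < r -> p (t *: a) < e.

Lemma pN y : p (- y) = p y.
Proof. by apply/le_anti; rewrite !p_solid // vabsN; exact: vle_refl. Qed.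

Lemma p_ge0 y : 0 <= p y.
Proof. by have := pD y (- y); rewrite subrr p0 pN; lra. Qed.

Lemma p_muln y k : p (y *+ k) <= k%:R * p y.
Proof.
elim: k => [|k IH]; first by rewrite mulr0n p0 mul0r.
by rewrite mulrS -natr1 mulrDl mul1r addrC; apply: le_trans (pD _ _) _; rewrite lerD2r.
Qed.

Lemma pZ_le t y : p (t *: y) <= (Num.bound `|t|)%:R * p y.
Proof. exact: le_trans (p_solid (vabs_scale_le_muln L t y)) (p_muln _ _). Qed.

Definition fdist y z := p (y - z).

Lemma fdist_metric : metric_on S fdist.
Proof.
have [_ [SD SZ]] := S_sub.
split; first by move=> *; exact: p_ge0.
split.
  move=> a b Sa Sb; split=> [|->]; last by rewrite /fdist subrr.
  have Sab : S (a - b) by rewrite -scaleN1r; exact: SD _ _ Sa (SZ _ _ Sb).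
  by move/(p_definite Sab)/subr0_eq.
split; first by move=> a b _ _; rewrite /fdist -opprB pN.
by move=> a b c _ _ _; rewrite /fdist -(subrKA b); exact: pD.
Qed.

Local Notation fopen := (metric_open S fdist).
Local Notation fball := (mball S fdist).

Lemma fdist_add_continuous a b W : S a -> S b -> fopen W -> W (a + b) ->
  exists U V, [/\ fopen U, fopen V, U a, V b & forall u v, U u -> V v -> W (u + v)].
Proof.
have [_ [SD _]] := S_sub; move=> Sa Sb [_ W_open] /W_open [e [e0 ball_e]].
have e2 : 0 < e / 2 by rewrite divr_gt0.
exists (fball a (e / 2)), (fball b (e / 2)).
split; [exact: (mball_open fdist_metric (e / 2) Sa) | exact: (mball_open fdist_metric (e / 2) Sb) |
        exact: (mball_center fdist_metric Sa e2) | exact: (mball_center fdist_metric Sb e2) |].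
move=> u v [Su du] [Sv dv]; apply: ball_e (SD _ _ Su Sv) _.
rewrite /fdist opprD addrACA; apply: le_lt_trans (pD _ _) _.
by move: du dv; rewrite /fdist; lra.
Qed.

(* [t a - b u = t (a - u) + (t - b) (u - a) + (t - b) a]: the three terms are controlled by
   [pZ_le], by [|t - b| <= 1] and by [pZ_small] respectively. *)
Lemma fdist_scale_continuous (t : R) a W : S a -> fopen W -> W (t *: a) ->
  exists (r : R) U, [/\ 0 < r, fopen U, U a &
    forall (b : R) u, `|b - t| < r -> U u -> W (b *: u)].
Proof.
have [_ [_ SZ]] := S_sub; move=> Sa [_ W_open] /W_open [e [e0 ball_e]].
pose K : R := (Num.bound `|t|)%:R.
have K0 : 0 <= K by [].
have e3 : 0 < e / 3 by rewrite divr_gt0.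
have [r1 r10 small_r1] := pZ_small a e3.
pose r2 := e / (3 * (K + 1)).
have r20 : 0 < r2 by rewrite divr_gt0 // mulr_gt0 // ltr_wpDl.
have Kr2 : K * r2 + r2 = e / 3.
  by rewrite /r2; field; rewrite gt_eqF // ltr_wpDl.
exists (Num.min r1 1), (fball a r2); split.
- by rewrite lt_min r10 ltr01.
- exact: (mball_open fdist_metric _ Sa).
- exact: (mball_center fdist_metric Sa r20).
move=> b u; rewrite lt_min => /andP[bt_r1 bt_1] [Su dau].
apply: ball_e (SZ b u Su) _; rewrite /fdist.
have -> : t *: a - b *: u = t *: (a - u) + ((t - b) *: (u - a) + (t - b) *: a).
  by rewrite -scalerDr subrK scalerBr scalerBl addrA subrK.
have term1 : p (t *: (a - u)) <= K * p (a - u) := pZ_le t (a - u).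
have term2 : p ((t - b) *: (u - a)) <= p (a - u).
  by rewrite -pN -scalerN opprB; apply/p_solid/vabs_scale_le1; rewrite distrC ltW.
have term3 : p ((t - b) *: a) < e / 3 by apply: small_r1; rewrite distrC.
have term1_small : K * p (a - u) <= K * r2 by rewrite ler_wpM2l // ltW.
move: dau; rewrite /fdist => dau.
apply: le_lt_trans (pD _ _) _; have := pD ((t - b) *: (u - a)) ((t - b) *: a).
lra.
Qed.

Lemma fdist_solid_basis W : nbhd_of fopen 0 W ->
  exists N, [/\ nbhd_of fopen 0 N, N `<=` W, N `<=` S & solid_in L S N].
Proof.
have S0 := S_sub.1; move=> [O [[_ O_open] O0 OW]].
have [e [e0 ball_e]] := O_open 0 O0.
exists (fball 0 e); split.
- exists (fball 0 e); split=> //; first exact: (mball_open fdist_metric _ S0).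
  exact: (mball_center fdist_metric S0 e0).
- by move=> v [Sv dv]; apply/OW/ball_e.
- by move=> v [].
- move=> a b [Sa da] Sb ab; split=> //; apply: le_lt_trans da.
  by rewrite /fdist !sub0r !pN; exact: p_solid.
Qed.

Lemma fdist_locally_solid : locally_solid_on L S fopen.
Proof.
split; last exact: fdist_solid_basis.
split; first exact: metric_topology.
split; first by move=> *; exact: fdist_add_continuous.
split; first by move=> *; exact: fdist_scale_continuous.
by move=> a b Sa Sb ab; exact: (metric_hausdorff fdist_metric Sa Sb ab).
Qed.

Variable tau : set (set E).
Hypothesis tau_ls : locally_solid_on L setT tau.
Hypothesis p_continuous : forall e : R, 0 < e ->
  exists2 W, nbhd_of tau 0 W & forall v, W v -> p v < e.

Lemma fdist_coarser : coarser fopen (restrict_top tau S).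
Proof.
move=> O [OS O_open]; have [[[_ [_ [_ [tauU _]]]] _] _] := tau_ls.
exists (\bigcup_(G in [set G | tau G /\ G `&` S `<=` O]) G); split.
  by apply: tauU => G [].
apply/seteqP; split=> [z Oz | z [[G [_ GO] Gz] Sz]]; last exact: GO.
split; last exact: OS.
have [e [e0 ball_e]] := O_open z Oz; have [W nW pW] := p_continuous e0.
have [G [tG Gz GW]] := nbhd_translate tau_ls z nW.
exists G => //; split=> // v [Gv Sv]; apply: ball_e Sv _.
by rewrite /fdist -opprB pN; exact/pW/GW.
Qed.

Lemma fnorm_solidly_submetrisable : solidly_submetrisable_on L S (restrict_top tau S).
Proof.
exists fopen; split; [exact: fdist_locally_solid | | exact: fdist_coarser].
by exists fdist; split; [exact: fdist_metric |].
Qed.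

End SolidFNorm.

Section Dyadic.
Variable R : realType.

Definition dyadic (n : nat) : R := (2 ^+ n)^-1.

Lemma dyadic_gt0 n : 0 < dyadic n.
Proof. by rewrite invr_gt0 exprn_gt0. Qed.

Lemma dyadicS n : dyadic n = dyadic n.+1 + dyadic n.+1.
Proof. by rewrite /dyadic exprS; field; rewrite expf_neq0 // pnatr_eq0. Qed.

Lemma dyadic_le m n : dyadic n <= dyadic m -> (m <= n)%N.
Proof. by rewrite lef_pV2 ?posrE ?exprn_gt0 // ler_eXn2l // ltr1n. Qed.

Lemma dyadic_lt (e : R) : 0 < e -> exists m, dyadic m < e.
Proof.
move=> e0; exists (Num.bound e^-1).
rewrite /dyadic -[e in _ < e]invrK ltf_pV2 ?posrE ?exprn_gt0 ?invr_gt0 //.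
apply: lt_trans (archi_boundP _) _; first by rewrite invr_ge0 ltW.
by rewrite -natrX ltr_nat ltn_expl.
Qed.

Lemma le_dyadic_le0 (a : R) : (forall m, a <= dyadic m) -> a <= 0.
Proof.
move=> a_le; apply/ler_addgt0Pr => e e0; rewrite add0r.
by have [m /ltW] := dyadic_lt e0; exact: le_trans (a_le m).
Qed.

End Dyadic.

Lemma sum_split_half (R : realType) (T : Type) (f : T -> R) (h : R) (l : seq T) :
  (forall t, 0 <= f t) -> l <> [::] -> \sum_(t <- l) f t <= h + h ->
  exists l1 a l2, [/\ l = l1 ++ a :: l2, \sum_(t <- l1) f t <= h & \sum_(t <- l2) f t <= h].
Proof.
move=> f_ge0 l0 lh.
suff split_after p : 0 <= p <= h -> l <> [::] -> p + \sum_(t <- l) f t <= h + h ->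
    exists l1 a l2, [/\ l = l1 ++ a :: l2, p + \sum_(t <- l1) f t <= h &
                       \sum_(t <- l2) f t <= h].
  have l_ge0 : 0 <= \sum_(t <- l) f t by apply: sumr_ge0 => t _; exact: f_ge0.
  have h0 : 0 <= h by lra.
  have [||l1 [a [l2 [-> h1 h2]]]] := split_after 0 _ l0; rewrite ?lexx ?add0r //.
  by exists l1, a, l2; rewrite add0r in h1.
elim: {l0 lh}l p => [//|a l IH] p /andP[p0 ph] _; rewrite big_cons => lh.
have [pa_h|pa_h] := lerP (p + f a) h; last first.
  by exists [::], a, l; rewrite big_nil addr0; split=> //; lra.
case: l IH lh => [|b l] IH lh.
  by exists [::], a, [::]; rewrite !big_nil addr0; split=> //; lra.
have [|//||l1 [c [l2 [-> h1 h2]]]] := IH (p + f a); first by rewrite pa_h addr_ge0.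
  by rewrite -addrA.
by exists (a :: l1), c, l2; rewrite big_cons addrA.
Qed.

Section Gauge.
Variables (R : realType) (E : lmodType R) (L : VectorLattice E).
Local Notation le := (vle L).
Local Notation abs := (vabs L).
Variable U : nat -> set E.
Hypothesis U0T : U 0%N = setT.
Hypothesis U0 : forall n, U n 0.
Hypothesis U_solid : forall n, solid L (U n).
Hypothesis U_add3 : forall n a b c, U n.+1 a -> U n.+1 b -> U n.+1 c -> U n (a + (b + c)).

Definition chain_weight (l : seq (nat * E)) : R := \sum_(q <- l) dyadic R q.1.
Definition chain_mass (l : seq (nat * E)) : E := \sum_(q <- l) abs q.2.
Definition is_chain (l : seq (nat * E)) : Prop := forall q, q \in l -> U q.1 q.2.

Lemma chain_weight_cons q l : chain_weight (q :: l) = dyadic R q.1 + chain_weight l.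
Proof. exact: big_cons. Qed.

Lemma chain_mass_cons q l : chain_mass (q :: l) = abs q.2 + chain_mass l.
Proof. exact: big_cons. Qed.

Lemma chain_weight_cat l1 l2 : chain_weight (l1 ++ l2) = chain_weight l1 + chain_weight l2.
Proof. exact: big_cat. Qed.

Lemma chain_mass_cat l1 l2 : chain_mass (l1 ++ l2) = chain_mass l1 + chain_mass l2.
Proof. exact: big_cat. Qed.

Lemma U_mono k n : (k <= n)%N -> U n `<=` U k.
Proof.
move=> /subnK <-; elim: (n - k)%N => [//|j IH] a; rewrite addSn => Ua.
by apply: IH; have := U_add3 Ua (U0 _) (U0 _); rewrite !addr0.
Qed.

Lemma U_vabs n z : U n z -> U n (abs z).
Proof. by move=> Uz; apply: U_solid Uz _; rewrite vabs_abs; exact: vle_refl. Qed.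

Lemma chain_weight_ge0 l : 0 <= chain_weight l.
Proof. by apply: sumr_ge0 => q _; exact/ltW/dyadic_gt0. Qed.

Lemma chain_weight_le0 l : chain_weight l <= 0 -> l = [::].
Proof.
case: l => [//|q l]; rewrite chain_weight_cons => w_le0; exfalso.
by have := dyadic_gt0 R q.1; have := chain_weight_ge0 l; lra.
Qed.

Lemma chain_mass_ge0 l : le 0 (chain_mass l).
Proof.
rewrite /chain_mass; elim: l => [|q l IH]; first by rewrite big_nil; exact: vle_refl.
by rewrite big_cons -[X in le X _](addr0 0); exact: vleD (vabs_ge0 L _) IH.
Qed.

(* Halve the budget [dyadic m]: split the chain at the element that crosses the midpoint;
   both sides then weigh at most [dyadic m.+1], and the middle element has index [>= m]. *)
Lemma chain_mass_mem l m : is_chain l -> chain_weight l <= dyadic R m -> U m (chain_mass l).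
Proof.
have [k] := ubnP (size l); elim: k => // k IH in l m *; rewrite ltnS => l_size l_chain l_w.
case: l => [|q0 l0] in l_size l_chain l_w *; first by rewrite /chain_mass big_nil.
have [||l1 [q [l2 [l_eq w1 w2]]]] := @sum_split_half R _ (fun q => dyadic R q.1)
  (dyadic R m.+1) (q0 :: l0) (fun q => ltW (dyadic_gt0 R q.1)) => //; first by rewrite -dyadicS.
move: l_size l_chain l_w; rewrite {}l_eq size_cat /= addnS => l_size l_chain.
rewrite chain_weight_cat chain_weight_cons chain_mass_cat chain_mass_cons => l_w.
have [l1_chain q_chain l2_chain] : [/\ is_chain l1, U q.1 q.2 & is_chain l2].
  by split=> [r r1|| r r2]; apply: l_chain; rewrite mem_cat ?inE ?r1 ?r2 ?eqxx ?orbT.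
have w1_ge0 := chain_weight_ge0 l1; have w2_ge0 := chain_weight_ge0 l2.
have /dyadic_le : dyadic R q.1 <= dyadic R m by lra.
rewrite leq_eqVlt => /predU1P[m_q | m_q].
  have /chain_weight_le0 -> : chain_weight l1 <= 0 by rewrite m_q in l_w; lra.
  have /chain_weight_le0 -> : chain_weight l2 <= 0 by rewrite m_q in l_w; lra.
  by rewrite /chain_mass !big_nil add0r addr0 m_q; exact: U_vabs.
apply: U_add3; first by apply: IH l1_chain w1; exact: leq_ltn_trans (leq_addr _ _) l_size.
  exact/U_vabs/(U_mono m_q).
by apply: IH l2_chain w2; exact: leq_ltn_trans (leq_addl _ _) l_size.
Qed.

Definition gauge (z : E) : R :=
  inf [set chain_weight l | l in [set l | is_chain l /\ le (abs z) (chain_mass l)]].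

Lemma gauge_le_weight z l : is_chain l -> le (abs z) (chain_mass l) -> gauge z <= chain_weight l.
Proof.
move=> l_chain zl; apply: ge_inf; last by exists l.
by exists 0 => _ [l' _ <-]; exact: chain_weight_ge0.
Qed.

Lemma gauge_set_nonempty z :
  [set chain_weight l | l in [set l | is_chain l /\ le (abs z) (chain_mass l)]] !=set0.
Proof.
exists (chain_weight [:: (0%N, z)]), [:: (0%N, z)] => //; split.
  by move=> q; rewrite inE => /eqP ->; rewrite U0T.
by rewrite /chain_mass big_seq1; exact: vle_refl.
Qed.

Lemma gauge_ge0 z : 0 <= gauge z.
Proof. by apply: lb_le_inf (gauge_set_nonempty z) _ => _ [l _ <-]; exact: chain_weight_ge0. Qed.

Lemma gauge_le_dyadic m z : U m z -> gauge z <= dyadic R m.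
Proof.
move=> Uz; have := @gauge_le_weight z [:: (m, z)].
rewrite /chain_weight /chain_mass !big_seq1; apply=> [q|]; last exact: vle_refl.
by rewrite inE => /eqP ->.
Qed.

Lemma gauge_lt_dyadic m z : gauge z < dyadic R m -> U m z.
Proof.
move=> /(inf_lt (gauge_set_nonempty z)) [_ [l [l_chain zl] <-]] /ltW l_w.
apply: U_solid (chain_mass_mem l_chain l_w) _.
by rewrite (vabs_id (chain_mass_ge0 l)).
Qed.

Lemma gauge0 : gauge 0 = 0.
Proof.
apply/le_anti; rewrite gauge_ge0 andbT; apply: le_dyadic_le0 => m.
exact/gauge_le_dyadic/U0.
Qed.

Lemma gauge_solid y z : le (abs y) (abs z) -> gauge y <= gauge z.
Proof.
move=> yz; apply: lb_le_inf (gauge_set_nonempty z) _ => _ [l [l_chain zl] <-].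
exact: gauge_le_weight l_chain (vle_trans yz zl).
Qed.

Lemma gaugeD y z : gauge (y + z) <= gauge y + gauge z.
Proof.
have gauge_inf w :
    has_inf [set chain_weight l | l in [set l | is_chain l /\ le (abs w) (chain_mass l)]].
  by split; [exact: gauge_set_nonempty | exists 0 => _ [l _ <-]; exact: chain_weight_ge0].
apply/ler_addgt0Pr => e e0; have e2 : 0 < e / 2 by rewrite divr_gt0.
have [_ [l1 [l1_chain yl1] <-] w1] := inf_adherent e2 (gauge_inf y).
have [_ [l2 [l2_chain zl2] <-] w2] := inf_adherent e2 (gauge_inf z).
have : gauge (y + z) <= chain_weight (l1 ++ l2).
  apply: gauge_le_weight => [q|].
    by rewrite mem_cat => /orP[/l1_chain | /l2_chain].
  by rewrite chain_mass_cat; exact: vle_trans (vabsD L y z) (vleD yl1 zl2).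
by rewrite chain_weight_cat; lra.
Qed.

End Gauge.

Section Submetrisability.
Variables (R : realType) (E : lmodType R) (L : VectorLattice E).
Local Notation le := (vle L).
Local Notation abs := (vabs L).
Variable tau : set (set E).

(* The balls of radius [2^-n] around [0] of a coarser metric are traces of [tau]-open sets. *)
Lemma solidly_submetrisable_separating_nbhds (S : set E) : S 0 ->
  solidly_submetrisable_on L S (restrict_top tau S) ->
  exists G : nat -> set E, (forall n, nbhd_of tau 0 (G n)) /\
    (forall a, S a -> (forall n, G n a) -> a = 0).
Proof.
move=> S0 [rho [_ [d [dS rho_d]] rho_tau]].
have /choice [G G_spec] n : exists G, tau G /\ mball S d 0 (dyadic R n) = G `&` S.
  by have /rho_d/rho_tau [G [tG ->]] := mball_open dS (dyadic R n) S0; exists G.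
exists G; split=> [n | a Sa Ga].
  have [tG ball_G] := G_spec n; exists (G n); split=> //.
  by have := mball_center dS S0 (dyadic_gt0 R n); rewrite ball_G => -[].
have [d_ge0 [d_eq0 _]] := dS; apply/esym/(d_eq0 0 a S0 Sa)/le_anti.
rewrite d_ge0 // andbT; apply: le_dyadic_le0 => n; apply: ltW.
by have [_ ball_G] := G_spec n; have [] : mball S d 0 (dyadic R n) a by rewrite ball_G.
Qed.

Variable x : E.
Hypothesis tau_ls : locally_solid_on L setT tau.
Variable U : nat -> set E.
Hypothesis U0T : U 0%N = setT.
Hypothesis U_nbhd : forall n, nbhd_of tau 0 (U n).
Hypothesis U_solid : forall n, solid L (U n).
Hypothesis U_add3 : forall n a b c, U n.+1 a -> U n.+1 b -> U n.+1 c -> U n (a + (b + c)).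
Hypothesis U_sep : forall a, ideal_gen L x a -> (forall n, U n a) -> a = 0.

Let U0 n : U n 0 := nbhd0 (U_nbhd n).
Let x_ge0 : le 0 (abs x) := vabs_ge0 L x.

Let p (y : E) : R := gauge L U (vtrunc L (abs x) y).

Let p_le_dyadic m v : U m v -> p v <= dyadic R m.
Proof.
move=> Uv; apply/gauge_le_dyadic/(U_solid Uv).
by rewrite (vabs_vtrunc x_ge0); exact: vtrunc_le_abs.
Qed.

Lemma band_gen_solidly_submetrisable :
  solidly_submetrisable_on L (band_gen L x) (restrict_top tau (band_gen L x)).
Proof.
apply: (@fnorm_solidly_submetrisable _ _ _ _ p (band_gen_vsubspace L x)) tau_ls _.
- by rewrite /p (vtrunc0 x_ge0) (gauge0 L U0T U0).
- move=> y z; apply: le_trans (gaugeD L U0T (vtrunc L (abs x) y) (vtrunc L (abs x) z)).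
  apply: (gauge_solid U0T); rewrite (vabs_vtrunc x_ge0) [abs (_ + _)]vabs_id.
    exact: (vtrunc_subadd x_ge0).
  by rewrite -[X in le X _](addr0 0); apply: vleD; exact: (vtrunc_ge0 x_ge0).
- by move=> y z yz; apply: (gauge_solid U0T); rewrite !(vabs_vtrunc x_ge0); exact: vtrunc_mono yz.
- move=> y By py0; apply: (band_gen_vtrunc_eq0 By); apply: U_sep => [|n].
    exact: vtrunc_ideal_gen.
  by apply: (gauge_lt_dyadic U0T U0 U_solid U_add3); rewrite -/(p y) py0 dyadic_gt0.
- move=> a e e0; have [m me] := dyadic_lt e0; have [r r0 small_r] := nbhd_scale tau_ls a (U_nbhd m).
  by exists r => // t tr; exact: le_lt_trans (p_le_dyadic (small_r t tr)) me.
- move=> e e0; have [m me] := dyadic_lt e0.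
  by exists (U m) => // v Uv; exact: le_lt_trans (p_le_dyadic Uv) me.
Qed.

End Submetrisability.

Theorem proposition3p6 (R : realType) (E : lmodType R) (L : VectorLattice E)
  (tau : set (set E)) (x : E) :
  locally_solid_on L setT tau ->
  (solidly_submetrisable_on L (band_gen L x) (restrict_top tau (band_gen L x)) <->
   solidly_submetrisable_on L (ideal_gen L x) (restrict_top tau (ideal_gen L x))).
Proof.
move=> tau_ls; have [I_sub _] := ideal_gen_ideal L x; split.
  exact: restrict_solidly_submetrisable (@ideal_gen_sub_band_gen _ _ L x) I_sub tau.
move=> /(solidly_submetrisable_separating_nbhds I_sub.1) [G [G_nbhd G_sep]].
have [U [U0T U_nbhd U_solid UG U_add3]] := nbhd_chain tau_ls G_nbhd.
apply: (band_gen_solidly_submetrisable tau_ls U0T U_nbhd U_solid U_add3) => a Ia Ua.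
by apply: G_sep Ia _ => n; exact/UG/Ua.
Qed.
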